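(* Let $G=(V,E,w)$ be a connected weighted graph with $n$ vertices. Then $$ n\sum_{e\in E} w_e B_e^{2}=R_{\mathrm{tot}}. $$
   Context: $G=(V,E,w)$ is an undirected graph with positive edge weights $w_e$ and Laplacian $L=D-A$ (weighted degree matrix minus weighted adjacency matrix); $L^{+}$ is its Moore–Penrose pseudoinverse, $L^{2+}=(L^+)^2$, and $1_v$ is the indicator vector of vertex $v$. The effective resistance is $R_{st}=(1_s-1_t)^{T}L^{+}(1_s-1_t)$ and the total resistance is $R_{\mathrm{tot}}=\sum_{\{s,t\}\subseteq V}R_{st}$, summed over unordered pairs of distinct vertices. The biharmonic distance is $B_{st}=\sqrt{(1_s-1_t)^{T}L^{2+}(1_s-1_t)}$, and $B_e:=B_{st}$ for an edge $e=\{s,t\}$. *)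

From HB Require Import structures.
From mathcomp Require Import all_boot all_order all_algebra.
Set Implicit Arguments. Unset Strict Implicit. Unset Printing Implicit Defensive.
Import Order.TTheory GRing.Theory Num.Theory.
Local Open Scope ring_scope.

(* A weighted undirected graph on vertex set 'I_n is given by a weight
   function w : 'I_n -> 'I_n -> R, symmetric, zero on the diagonal and
   nonnegative; {i,j} is an edge iff 0 < w i j (edges have positive weight). *)
Definition weighted_graph (R : realDomainType) (n : nat) (w : 'I_n -> 'I_n -> R) : Prop :=
  (forall i j, w i j = w j i) /\ (forall i, w i i = 0) /\ (forall i j, 0 <= w i j).

Definition adj (R : realDomainType) (n : nat) (w : 'I_n -> 'I_n -> R) : rel 'I_n :=
  fun i j => 0 < w i j.

Definition graph_connected (R : realDomainType) (n : nat) (w : 'I_n -> 'I_n -> R) : Prop :=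
  forall i j : 'I_n, connect (adj w) i j.

Definition laplacian (R : realDomainType) (n : nat) (w : 'I_n -> 'I_n -> R) : 'M[R]_n :=
  \matrix_(i, j) (if i == j then \sum_(k < n) w i k else - w i j).

(* X is the Moore–Penrose pseudoinverse of A (it exists and is unique). *)
Definition moore_penrose (R : realDomainType) (n : nat) (A X : 'M[R]_n) : Prop :=
  [/\ A *m X *m A = A, X *m A *m X = X, (A *m X)^T = A *m X & (X *m A)^T = X *m A].

Definition ind (R : realDomainType) (n : nat) (v : 'I_n) : 'cV[R]_n := delta_mx v 0.

Definition qform (R : realDomainType) (n : nat) (M : 'M[R]_n) (s t : 'I_n) : R :=
  ((ind R s - ind R t)^T *m M *m (ind R s - ind R t)) 0 0.

Definition eff_res (R : realDomainType) (n : nat) (Lp : 'M[R]_n) (s t : 'I_n) : R :=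
  qform Lp s t.

Definition total_res (R : realDomainType) (n : nat) (Lp : 'M[R]_n) : R :=
  \sum_(s < n) \sum_(t < n | (s < t)%N) eff_res Lp s t.

(* biharmonic distance, using L^{2+} = (L^+)^2 *)
Definition biharm (R : rcfType) (n : nat) (Lp : 'M[R]_n) (s t : 'I_n) : R :=
  Num.sqrt (qform (Lp *m Lp) s t).

From HB Require Import structures.
From mathcomp Require Import all_boot all_order all_algebra.
From mathcomp Require Import ring.
Import Order.TTheory GRing.Theory Num.Theory.
Local Open Scope ring_scope.

(* Both sides equal n tr L^+.  For every matrix M, summing the quadratic forms
   w_ij (1_i - 1_j)^T M (1_i - 1_j) over the edges gives tr (L M); with
   M = L^+ L^+ this is tr (L^+ L L^+) = tr L^+.  On the other hand L 1 = 0
   forces L^+ 1 = 0, so the sum of (1_s - 1_t)^T L^+ (1_s - 1_t) over all pairs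
   is n tr L^+ - 1^T L^+ 1 = n tr L^+. *)

Section SymmetricDoubleSums.

Context {R : realDomainType} {n : nat} {f : 'I_n -> 'I_n -> R}.
Hypotheses (f_sym : forall i j, f i j = f j i) (f_diag0 : forall i, f i i = 0).

Lemma sum_sym_pairs :
  \sum_(i < n) \sum_(j < n) f i j = 2%:R * \sum_(i < n) \sum_(j < n | (i < j)%N) f i j.
Proof.
have lower : \sum_(i < n) \sum_(j < n | (j < i)%N) f i j
             = \sum_(i < n) \sum_(j < n | (i < j)%N) f i j.
  rewrite (exchange_big_dep xpredT) //=.
  by apply: eq_bigr => i _; apply: eq_bigr => j _; exact: f_sym.
rewrite mulr_natl mulr2n -[X in _ = _ + X]lower -big_split /=; apply: eq_bigr => i _.
rewrite (bigID (fun j : 'I_n => (i < j)%N)) /=.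
rewrite [X in _ + X](bigD1 i) ?ltnn //= f_diag0 add0r.
by congr (_ + _); apply: eq_bigl => j; rewrite -leqNgt ltn_neqAle andbC.
Qed.

End SymmetricDoubleSums.

Lemma qformE {R : realDomainType} {n : nat} (M : 'M[R]_n) s t :
  qform M s t = M s s + M t t - M s t - M t s.
Proof.
have entry a b : ((ind R a)^T *m M *m ind R b) 0 0 = M a b.
  by rewrite /ind trmx_delta -rowE -colE !mxE.
have entryB (A B : 'M[R]_1) : (A - B) 0 0 = A 0 0 - B 0 0 by rewrite !mxE.
rewrite /qform mulmxBr [(_ - _)^T]raddfB /= !mulmxBl !entryB !entry.
ring.
Qed.

Lemma qform_sym {R : realDomainType} {n : nat} (M : 'M[R]_n) s t :
  qform M s t = qform M t s.
Proof. by rewrite !qformE; ring. Qed.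

Lemma qform_diag {R : realDomainType} {n : nat} (M : 'M[R]_n) s : qform M s s = 0.
Proof. by rewrite qformE; ring. Qed.

Lemma qform_mulmx_sym_ge0 {R : realDomainType} {n : nat} (M : 'M[R]_n) s t :
  M^T = M -> 0 <= qform (M *m M) s t.
Proof.
move=> M_sym; rewrite /qform; set b := ind R s - ind R t.
have -> : b^T *m (M *m M) *m b = (M *m b)^T *m (M *m b).
  by rewrite trmx_mul M_sym !mulmxA.
by rewrite mxE; apply: sumr_ge0 => k _; rewrite mxE -expr2 sqr_ge0.
Qed.

Lemma sum_pairs_qform {R : realDomainType} {n : nat} {M : 'M[R]_n} :
  M *m (const_mx 1 : 'cV[R]_n) = 0 ->
  \sum_(s < n) \sum_(t < n | (s < t)%N) qform M s t = n%:R * \tr M.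
Proof.
move=> M_ones; apply: (@mulfI _ 2%:R); first by rewrite pnatr_eq0.
rewrite -sum_sym_pairs; [|exact: qform_sym|exact: qform_diag].
under eq_bigr => s _ do under eq_bigr => t _ do rewrite qformE.
under eq_bigr => s _ do rewrite !sumrB big_split /=.
rewrite !sumrB big_split /=.
rewrite [\sum_s \sum_t M t t]exchange_big [\sum_s \sum_t M t s]exchange_big.
have diag : \sum_(s < n) \sum_(t < n) M s s = n%:R * \tr M.
  by rewrite mulr_sumr; apply: eq_bigr => s _; rewrite sumr_const card_ord mulr_natl.
have entries : \sum_(s < n) \sum_(t < n) M s t = 0.
  apply: big1 => s _; transitivity ((M *m (const_mx 1 : 'cV[R]_n)) s 0).
    by rewrite mxE; apply: eq_bigr => t _; rewrite mxE mulr1.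
  by rewrite M_ones mxE.
rewrite diag entries; ring.
Qed.

Lemma moore_penrose_sym {R : realDomainType} {n : nat} {A X : 'M[R]_n} :
  A^T = A -> moore_penrose A X -> X^T = X.
Proof.
move=> A_sym [AXA XAX AX_sym XA_sym].
have XA_AXT : X *m A = A *m X^T by rewrite -[LHS]XA_sym trmx_mul A_sym.
have AX_XTA : A *m X = X^T *m A by rewrite -[LHS]AX_sym trmx_mul A_sym.
have X_XXTA : X = X *m X^T *m A by rewrite -mulmxA -AX_XTA mulmxA XAX.
(* Inserting A = A X A into X = X X^T A gives X = X A X^T, a form fixed by transposition. *)
have X_XAXT : X = X *m A *m X^T.
  rewrite [LHS]X_XXTA -[in X *m X^T *m A]AXA !mulmxA -(mulmxA X X^T) -AX_XTA.
  by rewrite mulmxA XAX -mulmxA [in LHS]XA_AXT mulmxA.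
by rewrite [in LHS]X_XAXT !trmx_mul trmxK A_sym mulmxA -X_XAXT.
Qed.

Lemma moore_penrose_ker {R : realDomainType} {n m : nat} {A X : 'M[R]_n}
    {v : 'M[R]_(n, m)} :
  moore_penrose A X -> A^T *m v = 0 -> X *m v = 0.
Proof.
move=> [_ XAX AX_sym _] Av0.
have X_XXTAT : X = X *m X^T *m A^T by rewrite -mulmxA -trmx_mul AX_sym mulmxA XAX.
by rewrite X_XXTAT -mulmxA Av0 mulmx0.
Qed.

Section Laplacian.

Context {R : realDomainType} {n : nat} {w : 'I_n -> 'I_n -> R}.
Hypotheses (w_sym : forall i j, w i j = w j i) (w_diag0 : forall i, w i i = 0).

Lemma laplacian_sym : (laplacian w)^T = laplacian w.
Proof.
apply/matrixP=> i j; rewrite !mxE eq_sym.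
by case: eqP => [->|_] //; rewrite w_sym.
Qed.

Lemma laplacian_mul_const1 : laplacian w *m (const_mx 1 : 'cV[R]_n) = 0.
Proof.
apply/matrixP=> i k; rewrite !mxE (bigD1 i) //= !mxE eqxx mulr1.
rewrite (bigD1 i) //= w_diag0 add0r -big_split /= big1 // => j ji.
by rewrite !mxE mulr1 eq_sym (negbTE ji) addrN.
Qed.

Lemma laplacian_diagE :
  laplacian w = diag_mx (\row_i \sum_k w i k) - \matrix_(i, j) w i j.
Proof.
apply/matrixP=> i j; rewrite !mxE eq_sym.
by case: eqP => [->|_]; rewrite ?w_diag0 ?subr0 ?mulr1n ?mulr0n ?sub0r.
Qed.

Lemma laplacian_trace_qform (M : 'M[R]_n) :
  \tr (laplacian w *m M) = \sum_(i < n) \sum_(j < n | (i < j)%N) w i j * qform M i j.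
Proof.
apply: (@mulfI _ 2%:R); first by rewrite pnatr_eq0.
rewrite -sum_sym_pairs; last first.
- by move=> i; rewrite w_diag0 mul0r.
- by move=> i j; rewrite w_sym qform_sym.
have swap (F : 'I_n -> 'I_n -> R) :
    \sum_(i < n) \sum_(j < n) w i j * F j i = \sum_(i < n) \sum_(j < n) w i j * F i j.
  by rewrite exchange_big; apply: eq_bigr => i _; apply: eq_bigr => j _; rewrite w_sym.
have degree_part : \tr (diag_mx (\row_i \sum_k w i k) *m M) = \sum_i \sum_j w i j * M i i.
  by rewrite mul_diag_mx; apply: eq_bigr => i _; rewrite !mxE mulr_suml.
have adjacency_part : \tr ((\matrix_(i, j) w i j) *m M) = \sum_i \sum_j w i j * M j i.
  by apply: eq_bigr => i _; rewrite !mxE; apply: eq_bigr => j _; rewrite mxE.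
rewrite laplacian_diagE mulmxBl raddfB /= degree_part adjacency_part.
under eq_bigr => i _ do under eq_bigr => j _ do rewrite qformE !mulrBr mulrDr.
under eq_bigr => i _ do rewrite !sumrB big_split /=.
rewrite !sumrB big_split /= (swap (fun a _ => M a a)) (swap (fun a b => M b a)).
ring.
Qed.

End Laplacian.

Theorem corollary4p3 (R : rcfType) (n : nat) (w : 'I_n -> 'I_n -> R)
    (Lp : 'M[R]_n) :
  weighted_graph w -> graph_connected w ->
  moore_penrose (laplacian w) Lp ->
  n%:R * (\sum_(i < n) \sum_(j < n | (i < j)%N && (0 < w i j))
             w i j * biharm Lp i j ^+ 2)
  = total_res Lp.
Proof.
move=> [w_sym [w_diag0 w_ge0]] _ L_mp.
have Lp_sym := moore_penrose_sym (laplacian_sym w_sym) L_mp.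
have [_ LpLLp _ _] := L_mp.
have Lp_ones : Lp *m (const_mx 1 : 'cV[R]_n) = 0.
  apply: (moore_penrose_ker L_mp).
  by rewrite laplacian_sym // laplacian_mul_const1.
have edge_sum : \sum_(i < n) \sum_(j < n | (i < j)%N && (0 < w i j))
      w i j * biharm Lp i j ^+ 2 = \tr (laplacian w *m (Lp *m Lp)).
  rewrite laplacian_trace_qform //; apply: eq_bigr => i _.
  rewrite big_mkcondr /=; apply: eq_bigr => j _.
  have [w_gt0|w_le0] := ltP 0 (w i j).
    by rewrite /biharm sqr_sqrtr // qform_mulmx_sym_ge0.
  have -> : w i j = 0 by apply/eqP; rewrite eq_le w_le0 w_ge0.
  by rewrite mul0r.
rewrite edge_sum mulmxA mxtrace_mulC mulmxA LpLLp.
by rewrite /total_res /eff_res (sum_pairs_qform Lp_ones).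
Qed.
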